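(* Let $p=2$, $M=\mathbb{F}_2[x_1,\dots,x_N]/(x_1^2-x_1,\dots,x_N^2-x_N)$, and $1\le k\le N$. Let $\{f_I\}$ be a family of elements of $M$ indexed by the $k$-subsets $I$ of $[N]$, such that for every such $I$, $\deg\big(f_I-\prod_{i\in I}x_i\big)\le k-1$. Let $J$ be the ideal of $M$ generated by the $f_I$. Then $$\dim_{\mathbb{F}_2}(M/J)\le\sum_{j=0}^{k-1}\binom{N}{j}.$$
   Context: The degree of an element of $M$ is the degree of its unique multilinear representative. *)

From HB Require Import structures.
From mathcomp Require Import all_boot all_order all_algebra.
Set Implicit Arguments. Unset Strict Implicit. Unset Printing Implicit Defensive.
Import GRing.Theory.
Local Open Scope ring_scope.

(* Concrete model of M = F_2[x_1..x_N]/(x_i^2 - x_i): an element of M is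
   identified with its unique multilinear representative, i.e. with its
   coefficient function  S |-> coefficient of prod_{i in S} x_i,
   for S ranging over subsets of [N] = 'I_N.  Coefficients are taken in
   'F_2^o (= 'F_2 viewed as a vector space over itself), so that M is an
   F_2-vector space (vectType) of dimension 2^N. *)
Definition M (N : nat) := {ffun {set 'I_N} -> ('F_2)^o}.

(* Multiplication in M: x_A * x_B = x_(A cup B) since x_i^2 = x_i. *)
Definition Mmul (N : nat) (f g : M N) : M N :=
  [ffun S : {set 'I_N} =>
     \sum_(A : {set 'I_N}) \sum_(B : {set 'I_N} | A :|: B == S) f A * g B].

Definition Mmono (N : nat) (I : {set 'I_N}) : M N :=
  [ffun S : {set 'I_N} => (S == I)%:R].

(* deg f <= d  (degree of the multilinear representative; deg 0 = -oo). *)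
Definition Mdeg_le (N : nat) (f : M N) (d : nat) : Prop :=
  forall S : {set 'I_N}, f S != 0 -> (#|S| <= d)%N.

Definition gen_ideal (N k : nat) (f : {set 'I_N} -> M N) : {vspace M N} :=
  <<[seq Mmul g (f A) | g <- enum {: M N}, A <- enum [set A : {set 'I_N} | #|A| == k]]>>%VS.

From HB Require Import structures.
From mathcomp Require Import all_boot all_order all_algebra zify.
Set Implicit Arguments. Unset Strict Implicit. Unset Printing Implicit Defensive.
Import GRing.Theory.
Local Open Scope ring_scope.

(* Let L be the span of the monomials of degree < k; it suffices to show
   J + L = M, since then dim M - dim J <= dim L.  For |S| >= k pick a
   k-subset I of S: then x_(S\I) f_I = x_S + x_(S\I) (f_I - x_I) lies in J
   and the error term has degree < |S|, so by induction on |S| every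
   monomial x_S lies in J + L. *)

Section Multilinear.

Variable N : nat.
Implicit Types (A B I S T : {set 'I_N}) (f g h : M N).

Lemma M_expand f : f = \sum_T f T *: Mmono T.
Proof.
apply/ffunP=> S; rewrite sum_ffunE (bigD1 S) //= big1 => [|T /negPf nTS].
  by rewrite !ffunE eqxx addr0 [_ *: _]mulr1.
by rewrite !ffunE eq_sym nTS [_ *: _]mulr0.
Qed.

Lemma MmulDr f g h : Mmul f (g + h) = Mmul f g + Mmul f h.
Proof.
apply/ffunP=> S; rewrite !ffunE -big_split; apply: eq_bigr => A _.
by rewrite -big_split; apply: eq_bigr => B _; rewrite ffunE mulrDr.
Qed.

Lemma Mmul_mono A B : Mmul (Mmono A) (Mmono B) = Mmono (A :|: B).
Proof.
apply/ffunP=> S; rewrite !ffunE (bigD1 A) //= [X in _ + X]big1 => [|A' nA'A].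
  rewrite addr0 big_mkcond (bigD1 B) //= big1 => [|B' /negPf nB'B].
    by rewrite addr0 !ffunE !eqxx mulr1 eq_sym; case: eqP.
  by case: ifP => // _; rewrite [Mmono B B']ffunE nB'B mulr0.
by apply: big1 => B' _; rewrite [Mmono A A']ffunE (negPf nA'A) mul0r.
Qed.

Lemma Mdeg_le_mono A : Mdeg_le (Mmono A) #|A|.
Proof. by move=> S; rewrite ffunE; have [->|] := eqVneq S A; rewrite ?eqxx. Qed.

Lemma Mdeg_le_mul f g d e :
  Mdeg_le f d -> Mdeg_le g e -> Mdeg_le (Mmul f g) (d + e).
Proof.
move=> df dg S; apply: contraR; rewrite -ltnNge => deS.
rewrite ffunE; apply/eqP/big1 => A _; apply: big1 => B /eqP defS.
have [fA0|/df dA] := eqVneq (f A) 0; first by rewrite fA0 mul0r.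
have [gB0|/dg eB] := eqVneq (g B) 0; first by rewrite gB0 mulr0.
have := leq_card_setU A B; rewrite defS => /leqifP; case: ifP => _; lia.
Qed.

Lemma memv_Mdeg_le (U : {vspace M N}) f d :
  (forall T, (#|T| <= d)%N -> Mmono T \in U) -> Mdeg_le f d -> f \in U.
Proof.
move=> monoU df; rewrite [f]M_expand; apply: memv_suml => T _.
have [->|/df/monoU TU] := eqVneq (f T) 0; first by rewrite scale0r mem0v.
exact: memvZ.
Qed.

Lemma Mdeg_le_max f : Mdeg_le f N.
Proof. by move=> S _; rewrite -[X in (_ <= X)%N]card_ord max_card. Qed.

Lemma card_small_sets k :
  #|[set T : {set 'I_N} | (#|T| < k)%N]| = (\sum_(0 <= j < k) 'C(N, j))%N.
Proof.
elim: k => [|k IHk].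
  by rewrite big_geq // (_ : [set _ | _] = set0) ?cards0 //; apply/setP=> T; rewrite !inE.
have -> : [set T : {set 'I_N} | (#|T| < k.+1)%N] =
   [set T : {set 'I_N} | (#|T| < k)%N] :|: [set T : {set 'I_N} | #|T| == k].
  by apply/setP=> T; rewrite !inE ltnS leq_eqVlt orbC.
rewrite cardsU big_nat_recr //= IHk card_draws card_ord -[RHS]subn0.
congr (_ - _)%N; apply/eqP; rewrite cards_eq0; apply/eqP/setP=> T.
by rewrite !inE ltn_neqAle; case: eqP => _; rewrite ?andbF.
Qed.

Definition low_span k : {vspace M N} :=
  <<[seq Mmono T | T <- enum [set T : {set 'I_N} | (#|T| < k)%N]]>>%VS.

Lemma mono_low_span k T : (#|T| < k)%N -> Mmono T \in low_span k.
Proof. by move=> Tk; apply/memv_span/map_f; rewrite mem_enum inE. Qed.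

Lemma dim_low_span k : (\dim (low_span k) <= \sum_(0 <= j < k) 'C(N, j))%N.
Proof. by apply: leq_trans (dim_span _) _; rewrite size_map -cardE card_small_sets. Qed.

Section Ideal.

Variables (k : nat) (f : {set 'I_N} -> M N).
Hypothesis k_gt0 : (0 < k)%N.
Hypothesis lead_f : forall I, #|I| = k -> Mdeg_le (f I - Mmono I) (k - 1).

Lemma Mmul_gen_ideal g I : #|I| = k -> Mmul g (f I) \in gen_ideal k f.
Proof.
move=> cardI; apply/memv_span/allpairs_f; first by rewrite mem_enum memvf.
by rewrite mem_enum inE cardI.
Qed.

Lemma Mdeg_le_reduce S I : I \subset S -> #|I| = k ->
  Mdeg_le (Mmul (Mmono (S :\: I)) (f I) - Mmono S) #|S|.-1.
Proof.
move=> IS cardI; have kS : (k <= #|S|)%N by rewrite -cardI subset_leq_card.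
rewrite -[f I](subrK (Mmono I)) addrC MmulDr Mmul_mono.
have -> : S :\: I :|: I = S by rewrite setUC -{1}(setIidPr IS) setID.
rewrite addrC addrK; have := Mdeg_le_mul (@Mdeg_le_mono (S :\: I)) (lead_f cardI).
rewrite cardsD (setIidPr IS) cardI => dle T /dle; lia.
Qed.

Lemma mono_gen_ideal_low S : Mmono S \in (gen_ideal k f + low_span k)%VS.
Proof.
move: {2}#|S| (leqnn #|S|) => n; elim: n S => [|n IHn] S cardS.
  by apply/(subvP (addvSr _ _))/mono_low_span; lia.
have [Sk|kS] := ltnP #|S| k; first exact/(subvP (addvSr _ _))/mono_low_span.
have /card_gt0P[I] : (0 < #|[set I : {set 'I_N} | I \subset S & #|I| == k]|)%N.
  by rewrite cards_draws bin_gt0.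
rewrite inE => /andP[IS /eqP cardI].
rewrite -[Mmono S](subKr (Mmul (Mmono (S :\: I)) (f I))).
apply: memvB; first exact/(subvP (addvSl _ _))/Mmul_gen_ideal.
apply: memv_Mdeg_le _ (Mdeg_le_reduce IS cardI) => T cardT.
by apply: IHn; lia.
Qed.

End Ideal.

End Multilinear.

Theorem lemma2p11 (N k : nat) (f : {set 'I_N} -> M N) :
  (1 <= k)%N -> (k <= N)%N ->
  (forall I : {set 'I_N}, #|I| = k -> Mdeg_le (f I - Mmono I) (k - 1)) ->
  (\dim (fullv : {vspace M N}) - \dim (gen_ideal k f) <= \sum_(0 <= j < k) 'C(N, j))%N.
Proof.
move=> k_gt0 _ lead_f.
have J_L_full : (fullv <= gen_ideal k f + low_span N k)%VS.
  apply/subvP => v _; apply: memv_Mdeg_le _ (@Mdeg_le_max N v) => T _.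
  exact: mono_gen_ideal_low.
rewrite leq_subLR; apply: leq_trans (dimvS J_L_full) _.
have [dim_add _] := dimv_add_leqif (gen_ideal k f) (low_span N k).
by apply: leq_trans dim_add _; rewrite leq_add2l dim_low_span.
Qed.
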